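(* For every locally finite group $G$ there are a locally finite group $G^+$ containing $G$ as a subgroup and an element $a \in G^+$ such that: $G^+ = \langle G \cup \{a\}\rangle_{G^+}$; $a$ does not commute with any $b \in G \setminus \{e_G\}$; $a$ has order $2$; and the subgroups $G$ and $a^{-1}Ga$ commute elementwise in $G^+$.
   Context: A group is locally finite if every finitely generated subgroup is finite. *)

From Stdlib Require Import List.

Record Grp := {
  carrier :> Type;
  gmul : carrier -> carrier -> carrier;
  gone : carrier;
  ginv : carrier -> carrier;
  gassoc : forall x y z, gmul x (gmul y z) = gmul (gmul x y) z;
  gmul1g : forall x, gmul gone x = x;
  gmulVg : forall x, gmul (ginv x) x = gone
}.

Arguments gmul {g} _ _.
Arguments gone {g}.
Arguments ginv {g} _.

Inductive generated (G : Grp) (S : G -> Prop) : G -> Prop :=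
| gen_in : forall x, S x -> generated G S x
| gen_one : generated G S gone
| gen_mul : forall x y, generated G S x -> generated G S y -> generated G S (gmul x y)
| gen_inv : forall x, generated G S x -> generated G S (ginv x).
Arguments generated {G} S _.

Definition finite_subset {T : Type} (P : T -> Prop) : Prop :=
  exists l : list T, forall x, P x -> In x l.

Definition locally_finite (G : Grp) : Prop :=
  forall l : list G, finite_subset (generated (fun x => In x l)).

Definition is_hom {G H : Grp} (f : G -> H) : Prop :=
  forall x y, f (gmul x y) = gmul (f x) (f y).

(* Take G^+ to be the wreath product G wr C2 = (G x G) >< C2, with G embedded as
   the first coordinate and a the swap of coordinates.  Conjugation by a moves
   g into the second coordinate, so G and a^-1 G a commute, and a commutes with
   (b, 1) only if b = 1.  A finitely generated subgroup of G^+ has all its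
   coordinates in the subgroup of G generated by the coordinates of its
   generators, which is finite since G is locally finite. *)

From Stdlib Require Import List Bool.
Import ListNotations.

Section GroupFacts.
Variable G : Grp.

Lemma mulgV (x : G) : gmul x (ginv x) = gone.
Proof.
  rewrite <- (gmul1g G (gmul x (ginv x))), <- (gmulVg G (ginv x)) at 1.
  rewrite <- gassoc, (gassoc G (ginv x) x (ginv x)), gmulVg, gmul1g.
  apply gmulVg.
Qed.

Lemma mulg1 (x : G) : gmul x gone = x.
Proof. rewrite <- (gmulVg G x), gassoc, mulgV, gmul1g. reflexivity. Qed.

Lemma invg1 : ginv (gone : G) = gone.
Proof. rewrite <- (gmul1g G (ginv gone)). apply mulgV. Qed.

End GroupFacts.

Section WreathSquare.
Variable G : Grp.

(* [((x, y), s)] stands for the pair (x, y) followed by the swap when [s] is true. *)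
Definition wr2_mul (p q : G * G * bool) : G * G * bool :=
  match p, q with
  | ((x1, y1), s), ((x2, y2), t) =>
      if s then ((gmul x1 y2, gmul y1 x2), negb t)
      else ((gmul x1 x2, gmul y1 y2), t)
  end.

Definition wr2_one : G * G * bool := ((gone, gone), false).

Definition wr2_inv (p : G * G * bool) : G * G * bool :=
  match p with
  | ((x, y), s) => if s then ((ginv y, ginv x), true) else ((ginv x, ginv y), false)
  end.

Lemma wr2_mulA x y z : wr2_mul x (wr2_mul y z) = wr2_mul (wr2_mul x y) z.
Proof.
  destruct x as [[x1 x2] []], y as [[y1 y2] []], z as [[z1 z2] []];
    simpl; rewrite !gassoc; reflexivity.
Qed.

Lemma wr2_mul1g x : wr2_mul wr2_one x = x.
Proof. destruct x as [[x1 x2] s]; simpl; rewrite !gmul1g; reflexivity. Qed.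

Lemma wr2_mulVg x : wr2_mul (wr2_inv x) x = wr2_one.
Proof. destruct x as [[x1 x2] []]; simpl; rewrite !gmulVg; reflexivity. Qed.

Definition wreath2 : Grp :=
  {| carrier := G * G * bool; gmul := wr2_mul; gone := wr2_one; ginv := wr2_inv;
     gassoc := wr2_mulA; gmul1g := wr2_mul1g; gmulVg := wr2_mulVg |}.

Definition wr2_inl (g : G) : wreath2 := ((g, gone), false).

Definition wr2_swap : wreath2 := ((gone, gone), true).

Lemma wr2_inl_hom : is_hom wr2_inl.
Proof. intros x y; simpl; rewrite gmul1g; reflexivity. Qed.

Lemma wr2_inl_inj x y : wr2_inl x = wr2_inl y -> x = y.
Proof. unfold wr2_inl; congruence. Qed.

Lemma wr2_swap_neq1 : wr2_swap <> gone.
Proof. discriminate. Qed.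

Lemma wr2_swap_involutive : gmul wr2_swap wr2_swap = gone.
Proof. simpl; rewrite gmul1g; reflexivity. Qed.

Lemma wr2_conj_swap_inl h :
  gmul (ginv wr2_swap) (gmul (wr2_inl h) wr2_swap) = ((gone, h), false).
Proof. simpl; rewrite invg1, !gmul1g, mulg1; reflexivity. Qed.

Lemma wr2_inl_conj_commute g h :
  gmul (wr2_inl g) (gmul (ginv wr2_swap) (gmul (wr2_inl h) wr2_swap)) =
  gmul (gmul (ginv wr2_swap) (gmul (wr2_inl h) wr2_swap)) (wr2_inl g).
Proof. rewrite wr2_conj_swap_inl; simpl; rewrite !gmul1g, !mulg1; reflexivity. Qed.

Lemma wr2_swap_inl_commute b :
  gmul wr2_swap (wr2_inl b) = gmul (wr2_inl b) wr2_swap -> b = gone.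
Proof. simpl; rewrite !gmul1g, !mulg1; congruence. Qed.

Lemma wr2_generated_inl_swap (x : wreath2) :
  generated (fun y => (exists g, y = wr2_inl g) \/ y = wr2_swap) x.
Proof.
  set (S := fun y => (exists g, y = wr2_inl g) \/ y = wr2_swap).
  assert (S_swap : generated S wr2_swap) by (apply gen_in; right; reflexivity).
  assert (S_inl : forall g, generated S (wr2_inl g))
    by (intro g; apply gen_in; left; exists g; reflexivity).
  assert (S_pair : forall g h, generated S ((g, h), false)).
  { intros g h.
    replace ((g, h), false) with
      (gmul (wr2_inl g) (gmul wr2_swap (gmul (wr2_inl h) wr2_swap)) : wreath2)
      by (simpl; rewrite !gmul1g, !mulg1; reflexivity).
    repeat apply gen_mul; auto. }
  destruct x as [[g h] []]; [| apply S_pair].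
  replace ((g, h), true) with (gmul (((g, h), false) : wreath2) wr2_swap)
    by (simpl; rewrite !mulg1; reflexivity).
  apply gen_mul; auto.
Qed.

Definition wr2_coords (l : list wreath2) : list G :=
  flat_map (fun p : wreath2 => [fst (fst p); snd (fst p)]) l.

Lemma wr2_generated_coords {l : list wreath2} {x : wreath2} :
  generated (fun y => In y l) x ->
  generated (fun y => In y (wr2_coords l)) (fst (fst x)) /\
  generated (fun y => In y (wr2_coords l)) (snd (fst x)).
Proof.
  induction 1 as [x Hx | | x y _ [IHx1 IHx2] _ [IHy1 IHy2] | x _ [IH1 IH2]].
  - split; apply gen_in, in_flat_map; exists x; simpl; auto.
  - split; apply gen_one.
  - destruct x as [[x1 x2] []], y as [[y1 y2] t]; simpl in *;
      split; apply gen_mul; assumption.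
  - destruct x as [[x1 x2] []]; simpl in *; split; apply gen_inv; assumption.
Qed.

Lemma wr2_locally_finite : locally_finite G -> locally_finite wreath2.
Proof.
  intros HG l.
  destruct (HG (wr2_coords l)) as [F HF].
  exists (flat_map (fun u => flat_map (fun v => [((u, v), true); ((u, v), false)]) F) F).
  intros x Hx.
  destruct (wr2_generated_coords Hx) as [H1 H2].
  destruct x as [[x1 x2] s]; simpl in H1, H2.
  apply in_flat_map; exists x1; split; [auto |].
  apply in_flat_map; exists x2; split; [auto |].
  destruct s; simpl; auto.
Qed.

End WreathSquare.

Theorem claim2p18 :
  forall G : Grp, locally_finite G ->
  exists (Gp : Grp) (f : G -> Gp) (a : Gp),
    is_hom f /\ (forall x y, f x = f y -> x = y) /\
    locally_finite Gp /\
    (forall x : Gp, generated (fun y => (exists g, y = f g) \/ y = a) x) /\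
    (forall b : G, b <> gone -> gmul a (f b) <> gmul (f b) a) /\
    a <> gone /\ gmul a a = gone /\
    (forall g h : G,
        gmul (f g) (gmul (ginv a) (gmul (f h) a)) =
        gmul (gmul (ginv a) (gmul (f h) a)) (f g)).
Proof.
  intros G HG.
  exists (wreath2 G), (wr2_inl G), (wr2_swap G).
  repeat split.
  - apply wr2_inl_hom.
  - apply wr2_inl_inj.
  - now apply wr2_locally_finite.
  - apply wr2_generated_inl_swap.
  - intros b Hb Hab; exact (Hb (wr2_swap_inl_commute _ _ Hab)).
  - apply wr2_swap_neq1.
  - apply wr2_swap_involutive.
  - apply wr2_inl_conj_commute.
Qed.
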